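(* Consider the Polyhedral Clinching Auction run on the modified market as described in the context. At the moment just before the clinching step of any iteration, with $x_i=w(E_i)$ for the current $w$ and $d$ the current demands, for every $S\subseteq N$, $$g_{x,d}(S)=\min_{S'\subseteq S}\{f(E_{S'})-x(S')+d(S\setminus S')\}.$$
   Context: Market model. Buyers $N_0=\{1,\dots,n\}$, sellers $M=\{1,\dots,m\}$, bipartite edge set $E_0\subseteq N_0\times M$; edge $(i,j)$ written $ij$; for a set $S$ of participants $E_S$ is the set of edges incident to a member of $S$ ($E_i=E_{\{i\}}$); $w(F)=\sum_{e\in F}w_e$. Each seller $j$ has a monotone submodular $f_j:2^{E_j}\to\mathbb R_+$, $f_j(\emptyset)=0$. Buyer $i$ has per-unit valuation $v_i>0$ and budget $B_i\ge0$; seller $j$ has per-unit valuation $\rho_j>0$. Modified market. For each seller $j$ add a virtual buyer $n+j$ adjacent only to $j$ with $v_{n+j}=\rho_j$, $B_{n+j}=\infty$; $N=\{1,\dots,n+m\}$, $E=E_0\cup\{(n+j)j\}$; extend $f_j$ by $f_j(F)=f_j(E_j)$ if $(n+j)j\in F$, unchanged otherwise; $P_j=\{y\in\mathbb R^{E_j}_+:y(F)\le f_j(F)\ \forall F\}$, $P=\{w\in\mathbb R^E_+:w|_{E_j}\in P_j\ \forall j\}$, $f(S)=\sum_jf_j(S\cap E_j)$. For $x\in\mathbb R^N_+$, $d\in[0,\infty]^N$ and $S\subseteq N$: $g_{x,d}(S)=\min_{S'\subseteq S}\bigl\{\min_{S'\subseteq S''\subseteq N}\{f(E_{S''})-x(S'')\}+d(S\setminus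 S')\bigr\}$. Polyhedral Clinching Auction (PCA) with step $\varepsilon>0$: bids $v'_i$ for $i\in N$ (virtual buyer $n+j$ bids seller $j$'s bid), all assumed to be positive integer multiples of $\varepsilon$. State: $w\in\mathbb R^E_+$, payments $p$, revenues $r$, price clocks $c_i$, demands $d_i\in[0,\infty]$; initially $w=0,p=0,r=0$, $c_i=0$, $d_i=\infty$, pointer $l=1$. For $w,d$ let $P_{w,d}=\{y\in\mathbb R^E_+: w+y\in P,\ y(E_k)\le d_k\ \forall k\}$ and for $\xi\in\mathbb R^{E_i}_+$ let $P^i_{w,d}(\xi)=\{u\in\mathbb R^{N\setminus\{i\}}_+:\exists y\in P_{w,d},\ y|_{E_i}=\xi,\ y(E_k)=u_k\ \forall k\ne i\}$. While some $d_i\neq 0$, an iteration does: (1) clinching step: for $i=1,\dots,n+m$ in turn, choose a maximal $\xi_i\in\mathbb R^{E_i}_+$ with $P^i_{w,d}(\xi_i)=P^i_{w,d}(0)$, set $p_i\leftarrow p_i+c_i\xi_i(E_i)$, $w_{ij}\leftarrow w_{ij}+\xi_{ij}$, and reset every demand to $d_k=(B_k-p_k)/c_k$ if $c_k<v'_k$ and $d_k=0$ otherwise ($d_k=\infty$ while $c_k=0$); then $r_j\leftarrow r_j+\sum_{ij\in E_j}c_i\xi_{ij}$; (2) $c_l\leftarrow c_l+\varepsilon$ and $d_l\leftarrow(B_l-p_l)/c_l$ if $c_l<v'_l$, else $d_l\leftarrow0$; (3) advance $l$ cyclically. *)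

From HB Require Import structures.
From mathcomp Require Import all_boot all_order all_algebra.
From mathcomp Require Import constructive_ereal.
Set Implicit Arguments. Unset Strict Implicit. Unset Printing Implicit Defensive.
Import Order.TTheory GRing.Theory Num.Theory.
Local Open Scope ring_scope.

(* Participants N = {1..n+m} are represented by 'I_(n+m):
   index i < n is buyer i (via lshift), index n + j is the virtual buyer of seller j (via rshift).
   Edges are pairs (participant, seller). *)
Section PCA.
Variable R : realFieldType.
Variables n m : nat.
Variable E0 : {set 'I_n * 'I_m}.
Variable f0 : 'I_m -> {set 'I_n * 'I_m} -> R.
Variable B : 'I_n -> R.
Variable bid : 'I_(n+m) -> R.                    (* bids v'_i (virtual buyer n+j bids seller j's bid) *)
Variable eps : R.

Definition Part := 'I_(n+m).
Definition Edge := (Part * 'I_m)%type.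

Definition buyer (i : 'I_n) : Part := lshift m i.
Definition virt (j : 'I_m) : Part := rshift n j.

Definition E0j (j : 'I_m) : {set 'I_n * 'I_m} := [set e in E0 | e.2 == j].

Definition E : {set Edge} :=
  [set e : Edge | match split e.1 with
                  | inl i => (i, e.2) \in E0
                  | inr j => j == e.2
                  end].

Definition Ek (k : Part) : {set Edge} := [set e in E | e.1 == k].
Definition ES (S : {set Part}) : {set Edge} := [set e in E | e.1 \in S].
Definition Ej (j : 'I_m) : {set Edge} := [set e in E | e.2 == j].

Definition fext (j : 'I_m) (F : {set Edge}) : R :=
  if (virt j, j) \in F then f0 j (E0j j)
  else f0 j [set e : 'I_n * 'I_m | (buyer e.1, e.2) \in F].

Definition f (F : {set Edge}) : R := \sum_(j < m) fext j (F :&: Ej j).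

Definition inP (w : Edge -> R) : Prop :=
  (forall e, e \in E -> 0 <= w e) /\
  (forall (j : 'I_m) (F : {set Edge}), F \subset Ej j -> \sum_(e in F) w e <= fext j F).

Definition inPwd (w : Edge -> R) (d : Part -> \bar R) (y : Edge -> R) : Prop :=
  (forall e, e \in E -> 0 <= y e) /\ inP (fun e => w e + y e) /\
  (forall k : Part, ((\sum_(e in Ek k) y e)%:E <= d k)%E).

(* u ∈ P^i_{w,d}(xi)  (u is indexed by N; its i-th coordinate is ignored) *)
Definition inPi (w : Edge -> R) (d : Part -> \bar R) (i : Part) (xi : Edge -> R) (u : Part -> R) : Prop :=
  (forall k, k != i -> 0 <= u k) /\
  exists y, inPwd w d y /\ (forall e, e \in Ek i -> y e = xi e) /\
            (forall k, k != i -> \sum_(e in Ek k) y e = u k).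

Definition validxi (i : Part) (xi : Edge -> R) : Prop :=
  (forall e, e \in Ek i -> 0 <= xi e) /\ (forall e, e \notin Ek i -> xi e = 0).

Definition clinchable w d i xi : Prop :=
  forall u, inPi w d i xi u <-> inPi w d i (fun _ => 0) u.

Definition maximal_xi w d i xi : Prop :=
  validxi i xi /\ clinchable w d i xi /\
  forall xi', validxi i xi' -> clinchable w d i xi' ->
    (forall e, e \in Ek i -> xi e <= xi' e) -> forall e, e \in Ek i -> xi' e = xi e.

Definition Bext (k : Part) : \bar R :=
  match split k with inl i => (B i)%:E | inr _ => +oo%E end.

Definition dem (c p : Part -> R) (k : Part) : \bar R :=
  if c k == 0 then +oo%E
  else if c k < bid k then ((Bext k - (p k)%:E) * ((c k)^-1)%:E)%E
  else 0%E.

Record state := State {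
  st_w : Edge -> R;
  st_p : Part -> R;
  st_r : 'I_m -> R;
  st_c : Part -> R;
  st_d : Part -> \bar R;
  st_l : Part }.

Definition clinch1 (i : Part) (s s' : state) : Prop :=
  exists xi, maximal_xi (st_w s) (st_d s) i xi /\
    st_p s' = (fun k => if k == i then st_p s k + st_c s i * \sum_(e in Ek i) xi e
                        else st_p s k) /\
    st_w s' = (fun e => st_w s e + xi e) /\
    st_d s' = dem (st_c s) (st_p s') /\
    st_r s' = (fun j => st_r s j + \sum_(e in Ek i :&: Ej j) st_c s i * xi e) /\
    st_c s' = st_c s /\ st_l s' = st_l s.

Definition clinch_all (s s' : state) : Prop :=
  exists seqs : nat -> state, seqs 0%N = s /\ seqs (n + m)%N = s' /\
    forall i : Part, clinch1 i (seqs i) (seqs i.+1).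

Definition price_step (s s' : state) : Prop :=
  let l := st_l s in
  let c' := fun k => if k == l then st_c s k + eps else st_c s k in
  st_w s' = st_w s /\ st_p s' = st_p s /\ st_r s' = st_r s /\
  st_c s' = c' /\
  st_d s' = (fun k => if k == l then dem c' (st_p s) k else st_d s k) /\
  st_l s' = ordS l.

(* states at the moment just before the clinching step of an iteration
   (together with the loop condition, checked separately) *)
Inductive iter_start : state -> Prop :=
| iter_init (l0 : Part) : nat_of_ord l0 = 0%N ->
    iter_start (State (fun _ => 0) (fun _ => 0) (fun _ => 0) (fun _ => 0) (fun _ => +oo%E) l0)
| iter_next s s1 s2 : iter_start s -> (exists k, st_d s k != 0%E) ->
    clinch_all s s1 -> price_step s1 s2 -> iter_start s2.

Definition xw (w : Edge -> R) (k : Part) : R := \sum_(e in Ek k) w e.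

Definition sumx (x : Part -> R) (S : {set Part}) : R := \sum_(k in S) x k.
Definition sumd (d : Part -> \bar R) (S : {set Part}) : \bar R := (\sum_(k in S) d k)%E.

Definition g (x : Part -> R) (d : Part -> \bar R) (S : {set Part}) : \bar R :=
  \big[Order.min/+oo%E]_(S' : {set Part} | S' \subset S)
     (\big[Order.min/+oo%E]_(S'' : {set Part} | S' \subset S'')
         (f (ES S'') - sumx x S'')%:E
      + sumd d (S :\: S'))%E.

Definition gsimple (x : Part -> R) (d : Part -> \bar R) (S : {set Part}) : \bar R :=
  \big[Order.min/+oo%E]_(S' : {set Part} | S' \subset S)
     ((f (ES S') - sumx x S')%:E + sumd d (S :\: S'))%E.

End PCA.

Definition monotone_on (R : realFieldType) (T : finType) (D : {set T}) (h : {set T} -> R) :=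
  forall A C : {set T}, A \subset C -> C \subset D -> h A <= h C.
Definition submodular_on (R : realFieldType) (T : finType) (D : {set T}) (h : {set T} -> R) :=
  forall A C : {set T}, A \subset D -> C \subset D -> h (A :|: C) + h (A :&: C) <= h A + h C.

(* The proof maintains an invariant of the auction: at the start of every
   iteration, for every set S of participants and every Z with E_S <= Z <= E,
     min_{S' <= S} (f(E_S') - x(S') + d(S \ S'))  <=  f(Z) - w(Z).
   Together with gsimple(S) <= gsimple(S') + d(S \ S'), its instance for S'
   and Z = E_S'' shows that no term of g(S) is below gsimple(S), whence
   g = gsimple.  Price steps only lower demands, which preserves the
   invariant.  Clinching xi for a participant i lowers both sides by xi(E_i)
   when i is in S.  When i is not in S, the polymatroid intersection theorem,
   applied to A |-> min_{Z >= A} (f - w)(Z) and to the demands of the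
   participants incident to A, yields y in P_{w,d} supported on E_S whose
   value is the left-hand side; since P^i_{w,d}(xi) = P^i_{w,d}(0), y can be
   changed to agree with xi on E_i without changing its loads on the other
   participants, and w + y in P bounds the left-hand side by
   f(Z) - w(Z) - xi(Z). *)

From HB Require Import structures.
From mathcomp Require Import all_boot all_order all_algebra.
From mathcomp Require Import constructive_ereal.
From mathcomp Require Import ring lra.
Import Order.TTheory GRing.Theory Num.Theory.
Set Implicit Arguments. Unset Strict Implicit. Unset Printing Implicit Defensive.
Local Open Scope ring_scope.

Lemma ler_minD (R : realDomainType) (x a b c d : R) :
  x <= a + c -> x <= a + d -> x <= b + c -> x <= b + d ->
  x <= Num.min a b + Num.min c d.
Proof. by case: (leP a b); case: (leP c d). Qed.

Lemma sum_if_eq (R : nmodType) (T : finType) (A : {pred T}) (e : T) (t : R) :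
  \sum_(x in A) (if x == e then t else 0) = if e \in A then t else 0.
Proof.
rewrite -big_mkcondr /=; case: ifP => eA.
  by rewrite (big_pred1 e) // => x /=; case: (x =P e) => [->|]; rewrite ?eA ?andbF.
by rewrite big_pred0 // => x; case: (x =P e) => [->|]; rewrite ?eA ?andbF.
Qed.

Lemma setIU1_notin (T : finType) (A C : {set T}) e :
  e \notin A -> A :&: (e |: C) = A :&: C.
Proof.
by move=> eA; apply/setP => x; rewrite !inE; case: (x =P e) => [->|]; rewrite ?(negbTE eA).
Qed.

Lemma notin_subsetD1 (T : finType) (A D : {set T}) e : A \subset D :\ e -> e \notin A.
Proof. by rewrite subsetD1 => /andP[]. Qed.

Lemma subsetD1_sub (T : finType) (A D : {set T}) e : A \subset D :\ e -> A \subset D.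
Proof. by rewrite subsetD1 => /andP[]. Qed.

Lemma subsetD1_setU1 (T : finType) (A D : {set T}) e :
  e \in D -> A \subset D :\ e -> e |: A \subset D.
Proof. by move=> eD sA; rewrite subUset sub1set eD (subsetD1_sub sA). Qed.

Lemma setD_subsetD1 (T : finType) (A D : {set T}) e :
  e \in D -> A \subset D :\ e -> D :\: A = e |: (D :\ e :\: A).
Proof.
move=> eD /notin_subsetD1 eA; apply/setP => x; rewrite !inE.
by case: (x =P e) => [->|]; rewrite ?eD ?(negbTE eA).
Qed.

Lemma sum_setU_setI (V : nmodType) (T : finType) (A C : {set T}) (F : T -> V) :
  \sum_(x in A :|: C) F x + \sum_(x in A :&: C) F x =
  \sum_(x in A) F x + \sum_(x in C) F x.
Proof.
rewrite ![\sum_(x in _) F x]big_mkcond -!big_split /=; apply: eq_bigr => x _.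
by rewrite !inE; case: (x \in A); case: (x \in C); rewrite ?addr0 ?add0r.
Qed.

Lemma sum_subset_le (R : numDomainType) (T : finType) (A C : {set T}) (F : T -> R) :
  A \subset C -> (forall x, x \in C -> 0 <= F x) ->
  \sum_(x in A) F x <= \sum_(x in C) F x.
Proof.
move=> sAC F0; rewrite [X in _ <= X](big_setID A) /= (setIidPr sAC) lerDl.
by apply: sumr_ge0 => x; rewrite inE => /andP[_ /F0].
Qed.

Lemma sum_setI_support (V : nmodType) (T : finType) (F D : {set T}) (y : T -> V) :
  (forall x, x \notin D -> y x = 0) -> \sum_(x in F) y x = \sum_(x in F :&: D) y x.
Proof.
move=> yD; rewrite (big_setID D) /= [X in _ + X]big1 ?addr0 // => x.
by rewrite !inE => /andP[/yD].
Qed.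

Section PolymatroidIntersection.
Variables (R : realFieldType) (X : finType).
Implicit Types (D A C : {set X}) (r : {set X} -> R) (y : X -> R).

Definition polymatroid D r := [/\ r set0 = 0, monotone_on D r & submodular_on D r].

Definition in_polytope D r y := forall A, A \subset D -> \sum_(x in A) y x <= r A.

Lemma polymatroid_ge0 D r A : polymatroid D r -> A \subset D -> 0 <= r A.
Proof. by move=> [r0 rmon _] sAD; rewrite -r0 rmon ?sub0set. Qed.

Lemma polymatroid_setU1 D r e A : polymatroid D r -> e \in D -> e \notin A ->
  A \subset D -> r (e |: A) <= r A + r [set e].
Proof.
move=> [r0 _ rsub] eD eA sAD; have := rsub A [set e] sAD; rewrite sub1set => /(_ eD).
have -> : A :&: [set e] = set0 by rewrite -[X in A :&: X]setU0 setIU1_notin // setI0.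
by rewrite setUC r0 addr0.
Qed.

(* Vectors on D :\ e that remain below [r] once [e] receives [t]. *)
Definition contract r e t A := Num.min (r A) (r (e |: A) - t).

Lemma polymatroid_contract D r e t : polymatroid D r -> e \in D ->
  t <= r [set e] -> polymatroid (D :\ e) (contract r e t).
Proof.
move=> [r0 rmon rsub] eD te; split.
- by rewrite /contract setU0 r0 min_l // subr_ge0.
- move=> A C sAC sC; rewrite /contract le_min !ge_min lerD2r.
  by rewrite !rmon ?orbT ?setUS ?(subsetD1_sub sC) ?(subsetD1_setU1 eD sC).
move=> A C sA sC; have eA := notin_subsetD1 sA; have eC := notin_subsetD1 sC.
have sAD := subsetD1_sub sA; have sCD := subsetD1_sub sC.
have sAe := subsetD1_setU1 eD sA; have sCe := subsetD1_setU1 eD sC.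
have := rsub _ _ sAD sCD; have := rsub _ _ sAe sCe.
have := rsub _ _ sAD sCe; have := rsub _ _ sAe sCD.
have -> : (e |: A) :|: (e |: C) = e |: (A :|: C) by rewrite setUACA setUid.
have -> : (e |: A) :&: (e |: C) = e |: (A :&: C) by rewrite -setUIr.
have -> : A :|: (e |: C) = e |: (A :|: C) by rewrite setUCA.
have -> : (e |: A) :|: C = e |: (A :|: C) by rewrite setUA.
rewrite setIU1_notin // [(e |: A) :&: C]setIC setIU1_notin // [C :&: A]setIC.
set uU := contract r e t (A :|: C); set uI := contract r e t (A :&: C).
have uU1 : uU <= r (A :|: C) by rewrite ge_min lexx.
have uU2 : uU <= r (e |: (A :|: C)) - t by rewrite ge_min lexx orbT.
have uI1 : uI <= r (A :&: C) by rewrite ge_min lexx.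
have uI2 : uI <= r (e |: (A :&: C)) - t by rewrite ge_min lexx orbT.
by move=> *; apply: ler_minD; lra.
Qed.

Lemma contract_lift D r e t y : e \in D -> y e = 0 ->
  in_polytope (D :\ e) (contract r e t) y ->
  in_polytope D r (fun x => y x + (if x == e then t else 0)).
Proof.
move=> eD ye yc A sAD; rewrite big_split /= sum_if_eq.
case: ifP => eA.
  rewrite (big_setD1 _ eA) /= ye add0r -lerBrDr.
  by apply: le_trans (yc _ (setSD _ sAD)) _; rewrite ge_min setD1K // lexx orbT.
have sA : A \subset D :\ e by rewrite subsetD1 sAD eA.
by rewrite addr0; apply: le_trans (yc _ sA) _; rewrite ge_min lexx.
Qed.

Section Threshold.
Variables (D : {set X}) (e : X) (r1 r2 : {set X} -> R) (mu : R).
Hypotheses (eD : e \in D) (p1 : polymatroid D r1) (p2 : polymatroid D r2).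
Hypothesis cut : forall A, A \subset D -> mu <= r1 A + r2 (D :\: A).

Local Notation D' := (D :\ e).

(* The part of [mu] that the cuts of D :\ e cannot carry; [e] has to take it. *)
Definition threshold :=
  \big[Num.max/0]_(A : {set X} | A \subset D') (mu - r1 A - r2 (D' :\: A)).

Lemma threshold_ge0 : 0 <= threshold.
Proof. exact: bigmax_ge_id. Qed.

Lemma threshold_ub A : A \subset D' -> mu - r1 A - r2 (D' :\: A) <= threshold.
Proof. by move=> sA; apply: (le_bigmax_cond _ (fun A => mu - r1 A - r2 (D' :\: A))). Qed.

Lemma threshold_least z :
  0 <= z -> (forall A, A \subset D' -> mu - r1 A - r2 (D' :\: A) <= z) -> threshold <= z.
Proof. exact: bigmax_le. Qed.

Lemma threshold_le1 : threshold <= r1 [set e].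
Proof.
apply: threshold_least => [|A sA]; first by apply: polymatroid_ge0 p1 _; rewrite sub1set.
have := cut (subsetD1_setU1 eD sA); rewrite -setDDl.
have := polymatroid_setU1 p1 eD (notin_subsetD1 sA) (subsetD1_sub sA).
lra.
Qed.

Lemma threshold_le2 : threshold <= r2 [set e].
Proof.
apply: threshold_least => [|A sA]; first by apply: polymatroid_ge0 p2 _; rewrite sub1set.
have sDA : D' :\: A \subset D' by apply: subsetDl.
have := cut (subsetD1_sub sA); rewrite (setD_subsetD1 eD) //.
have := polymatroid_setU1 p2 eD (notin_subsetD1 sDA) (subsetD1_sub sDA).
lra.
Qed.

Lemma threshold_le_extend A : A \subset D' ->
  threshold <= r1 (e |: A) + r2 (e |: (D' :\: A)) - mu.
Proof.
move=> sA; have [_ r2mon _] := p2; have [_ _ r1sub] := p1; have [_ _ r2sub] := p2.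
have sDA : D' :\: A \subset D' by apply: subsetDl.
apply: threshold_least => [|B sB].
  have := cut (subsetD1_setU1 eD sA); rewrite -setDDl.
  have := r2mon _ _ (subsetU1 e (D' :\: A)) (subsetD1_setU1 eD sDA); lra.
have sDB : D' :\: B \subset D' by apply: subsetDl.
have sAB : A :&: B \subset D' by apply: subset_trans (subsetIl _ _) sA.
have sAUB : A :|: B \subset D' by rewrite subUset sA.
have := r1sub _ _ (subsetD1_setU1 eD sA) (subsetD1_sub sB).
rewrite -setUA [(e |: A) :&: B]setIC setIU1_notin ?(notin_subsetD1 sB) //.
have := r2sub _ _ (subsetD1_setU1 eD sDA) (subsetD1_sub sDB).
rewrite -setUA -setDIr [(e |: _) :&: _]setIC setIU1_notin ?(notin_subsetD1 sDB) //.
rewrite -setDUr.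
have := cut (subsetD1_sub sAB); rewrite (setD_subsetD1 eD) //.
have := cut (subsetD1_setU1 eD sAUB); rewrite -setDDl.
rewrite [B :&: A]setIC [B :|: A]setUC; lra.
Qed.

Lemma contract_cut A : A \subset D' ->
  mu - threshold <= contract r1 e threshold A + contract r2 e threshold (D' :\: A).
Proof.
move=> sA; apply: ler_minD.
- by have := threshold_ub sA; lra.
- have := cut (subsetD1_sub sA); rewrite (setD_subsetD1 eD) //; lra.
- have := cut (subsetD1_setU1 eD sA); rewrite -setDDl; lra.
- by have := threshold_le_extend sA; lra.
Qed.

End Threshold.

Theorem polymatroid_intersection D r1 r2 mu :
  polymatroid D r1 -> polymatroid D r2 ->
  (forall A, A \subset D -> mu <= r1 A + r2 (D :\: A)) ->
  exists y, [/\ forall x, 0 <= y x, forall x, x \notin D -> y x = 0,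
    in_polytope D r1 y, in_polytope D r2 y & mu <= \sum_(x in D) y x].
Proof.
have [k] := ubnP #|D|; elim: k => // k IH in D r1 r2 mu *; rewrite ltnS => cD p1 p2 cut.
have [D0|[e eD]] := set_0Vmem D.
  have [r10 _ _] := p1; have [r20 _ _] := p2; subst D.
  exists (fun=> 0); split => // [A sA|A sA|]; rewrite big1_eq.
  - exact: polymatroid_ge0 p1 sA.
  - exact: polymatroid_ge0 p2 sA.
  - by have := cut _ (sub0set _); rewrite setD0 r10 r20 addr0.
have cD' : (#|D :\ e| < k)%N by move: cD; rewrite (cardsD1 e) eD.
have [y [y0 yD y1 y2 ymu]] := IH _ _ _ _ cD'
  (polymatroid_contract p1 eD (threshold_le1 eD p1 cut))
  (polymatroid_contract p2 eD (threshold_le2 eD p2 cut))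
  (contract_cut eD p1 p2 cut).
set t := threshold D e r1 r2 mu in y1 y2 ymu *.
have ye : y e = 0 by apply: yD; rewrite !inE eqxx.
exists (fun x => y x + (if x == e then t else 0)); split.
- by move=> x; case: eqP; rewrite ?addr0 // => _; rewrite addr_ge0 ?threshold_ge0.
- move=> x xD; rewrite yD ?inE ?(negbTE xD) ?andbF //.
  by case: (x =P e) xD => [->|]; rewrite ?eD ?addr0.
- exact: contract_lift.
- exact: contract_lift.
rewrite big_split /= sum_if_eq eD (big_setD1 _ eD) /= ye add0r; lra.
Qed.

End PolymatroidIntersection.

Section Market.
Variables (R : realFieldType) (n m : nat).
Variables (E0 : {set 'I_n * 'I_m}) (f0 : 'I_m -> {set 'I_n * 'I_m} -> R).
Hypothesis f0_set0 : forall j, f0 j set0 = 0.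
Hypothesis f0_ge0 : forall j (F : {set 'I_n * 'I_m}), F \subset E0j E0 j -> 0 <= f0 j F.
Hypothesis f0_mono : forall j, monotone_on (E0j E0 j) (f0 j).
Hypothesis f0_submod : forall j, submodular_on (E0j E0 j) (f0 j).

Local Notation EE := (E E0).
Local Notation Ekk := (Ek E0).
Local Notation ESS := (ES E0).
Local Notation Ejj := (Ej E0).
Local Notation fx := (fext E0 f0).
Local Notation ff := (f E0 f0).
Local Notation Edg := (Edge n m).
Local Notation Prt := (Part n m).
Implicit Types (A C D F Z : {set Edg}) (S T U : {set Prt}) (w y : Edg -> R).

Lemma split_buyer (i : 'I_n) : split (buyer m i) = inl i.
Proof. by rewrite /buyer -[lshift m i]/(unsplit (inl i)) unsplitK. Qed.

Lemma inEk e k : (e \in Ekk k) = (e \in EE) && (e.1 == k).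
Proof. by rewrite inE. Qed.

Lemma inES e S : (e \in ESS S) = (e \in EE) && (e.1 \in S).
Proof. by rewrite inE. Qed.

Lemma inEj e j : (e \in Ejj j) = (e \in EE) && (e.2 == j).
Proof. by rewrite inE. Qed.

Lemma Ek_sub k : Ekk k \subset EE.
Proof. by apply/subsetP => e; rewrite inEk => /andP[]. Qed.

Lemma ES_sub S : ESS S \subset EE.
Proof. by apply/subsetP => e; rewrite inES => /andP[]. Qed.

Lemma Ej_sub j : Ejj j \subset EE.
Proof. by apply/subsetP => e; rewrite inEj => /andP[]. Qed.

Lemma ES_subset S T : S \subset T -> ESS S \subset ESS T.
Proof. by move=> sST; apply/subsetP => e; rewrite !inES => /andP[-> /(subsetP sST)]. Qed.

Lemma sum_ES (F : Edg -> R) S :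
  \sum_(e in ESS S) F e = \sum_(k in S) \sum_(e in Ekk k) F e.
Proof.
rewrite (partition_big (fun e : Edg => e.1) (mem S)) => [|e]; last by rewrite inES => /andP[].
apply: eq_bigr => k kS; apply: eq_bigl => e; rewrite inES inEk.
by case: (e.1 =P k) => [->|_]; rewrite ?andbF // (kS : k \in S) andbT.
Qed.

Lemma sumx_xw w S : sumx (xw E0 w) S = \sum_(e in ESS S) w e.
Proof. by rewrite sum_ES. Qed.

Lemma sum_Ej (F : Edg -> R) Z : Z \subset EE ->
  \sum_(e in Z) F e = \sum_(j < m) \sum_(e in Z :&: Ejj j) F e.
Proof.
move=> sZ; rewrite (partition_big (fun e : Edg => e.2) predT) //=.
apply: eq_bigr => j _; apply: eq_bigl => e; rewrite inE inEj.
by case eZ : (e \in Z); rewrite ?(subsetP sZ e eZ).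
Qed.

Definition real_edges F : {set 'I_n * 'I_m} := [set e | (buyer m e.1, e.2) \in F].

Lemma real_edges_sub j F : F \subset Ejj j -> real_edges F \subset E0j E0 j.
Proof.
move=> sF; apply/subsetP => -[i j']; rewrite !inE /= => /(subsetP sF).
by rewrite inEj inE /= split_buyer.
Qed.

Lemma real_edgesU A C : real_edges (A :|: C) = real_edges A :|: real_edges C.
Proof. by apply/setP => e; rewrite !inE. Qed.

Lemma real_edgesI A C : real_edges (A :&: C) = real_edges A :&: real_edges C.
Proof. by apply/setP => e; rewrite !inE. Qed.

Lemma real_edgesS A C : A \subset C -> real_edges A \subset real_edges C.
Proof. by move=> sAC; apply/subsetP => e; rewrite !inE => /(subsetP sAC). Qed.

Lemma fextE j F : fx j F = if (virt n j, j) \in F then f0 j (E0j E0 j) else f0 j (real_edges F).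
Proof. by []. Qed.

Lemma fext_set0 j : fx j set0 = 0.
Proof.
rewrite fextE inE (_ : real_edges set0 = set0) ?f0_set0 //.
by apply/setP => e; rewrite !inE.
Qed.

Lemma fext_ge0 j F : F \subset Ejj j -> 0 <= fx j F.
Proof.
by move=> sF; rewrite fextE; case: ifP => _; apply: f0_ge0; rewrite ?(real_edges_sub sF).
Qed.

Lemma fext_mono j A C : A \subset C -> C \subset Ejj j -> fx j A <= fx j C.
Proof.
move=> sAC sC; have sA := subset_trans sAC sC; rewrite !fextE.
case: ifP => vA; first by rewrite (subsetP sAC _ vA).
case: ifP => _; apply: f0_mono; rewrite ?real_edgesS ?(real_edges_sub sA) //.
exact: real_edges_sub sC.
Qed.

Lemma fext_submod j A C : A \subset Ejj j -> C \subset Ejj j ->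
  fx j (A :|: C) + fx j (A :&: C) <= fx j A + fx j C.
Proof.
move=> sA sC; rewrite !fextE real_edgesU real_edgesI !inE.
have rA := real_edges_sub sA; have rC := real_edges_sub sC.
case: ((virt n j, j) \in A); case: ((virt n j, j) \in C) => /=.
- by rewrite lexx.
- by have := f0_mono (subsetIr (real_edges A) (real_edges C)) rC; lra.
- by have := f0_mono (subsetIl (real_edges A) (real_edges C)) rA; lra.
- exact: f0_submod.
Qed.

Lemma f_Ej j F : F \subset Ejj j -> ff F = fx j F.
Proof.
move=> sF; rewrite /f (bigD1 j) //= (setIidPl sF) big1 ?addr0 // => j' j'j.
rewrite (_ : F :&: Ejj j' = set0) ?fext_set0 //; apply/setP => e; rewrite in_set0 in_setI inEj.
case eF : (e \in F) => //=; move: (subsetP sF e eF); rewrite inEj => /andP[-> /eqP ->].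
by rewrite eq_sym (negbTE j'j).
Qed.

Lemma f_set0 : ff set0 = 0.
Proof. by rewrite /f big1 // => j _; rewrite set0I fext_set0. Qed.

Lemma f_mono A C : A \subset C -> ff A <= ff C.
Proof.
by move=> sAC; apply: ler_sum => j _; apply: fext_mono; [apply: setSI | apply: subsetIr].
Qed.

Lemma f_submod A C : ff (A :|: C) + ff (A :&: C) <= ff A + ff C.
Proof.
rewrite /f -!big_split /=; apply: ler_sum => j _.
rewrite setIUl -[Ejj j]setIid setIACA setIid.
by apply: fext_submod; apply: subsetIr.
Qed.

Definition slack w Z := ff Z - \sum_(e in Z) w e.

Lemma slack_submod w A C : slack w (A :|: C) + slack w (A :&: C) <= slack w A + slack w C.
Proof. by rewrite /slack; have := f_submod A C; have := sum_setU_setI A C w; lra. Qed.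

Lemma inP_sum_le w Z : inP E0 f0 w -> Z \subset EE -> \sum_(e in Z) w e <= ff Z.
Proof. by move=> [_ wP] sZ; rewrite sum_Ej //; apply: ler_sum => j _; apply/wP/subsetIr. Qed.

Lemma slack_ge0 w Z : inP E0 f0 w -> Z \subset EE -> 0 <= slack w Z.
Proof. by move=> wP sZ; rewrite subr_ge0 inP_sum_le. Qed.

Definition min_slack w A :=
  slack w [arg min_(Z < EE | (A \subset Z) && (Z \subset EE)) slack w Z]%O.

Lemma min_slackP w A : A \subset EE -> exists Z,
  [/\ A \subset Z, Z \subset EE, min_slack w A = slack w Z &
      forall Z', A \subset Z' -> Z' \subset EE -> slack w Z <= slack w Z'].
Proof.
move=> sA; rewrite /min_slack; case: arg_minP; first by rewrite sA subxx.
by move=> Z /andP[sAZ sZ] Zmin; exists Z; split => // Z' s1 s2; apply: Zmin; rewrite s1.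
Qed.

Lemma min_slack_le w A Z : A \subset Z -> Z \subset EE -> min_slack w A <= slack w Z.
Proof.
move=> sAZ sZ; have [Z0 [_ _ -> Z0min]] := min_slackP w (subset_trans sAZ sZ).
exact: Z0min.
Qed.

Lemma polymatroid_min_slack w D : inP E0 f0 w -> D \subset EE -> polymatroid D (min_slack w).
Proof.
move=> wP sD; split.
- apply/eqP; rewrite eq_le; apply/andP; split.
    apply: le_trans (min_slack_le w (sub0set _) (sub0set _)) _.
    by rewrite /slack f_set0 big_set0 subr0.
  by have [Z [_ sZ -> _]] := min_slackP w (sub0set EE); apply: slack_ge0.
- move=> A C sAC sCD; have sC := subset_trans sCD sD.
  have [Z [sCZ sZ -> _]] := min_slackP w sC.
  exact: min_slack_le (subset_trans sAC sCZ) sZ.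
move=> A C sAD sCD.
have [ZA [sAZ sZA -> _]] := min_slackP w (subset_trans sAD sD).
have [ZC [sCZ sZC -> _]] := min_slackP w (subset_trans sCD sD).
apply: le_trans (slack_submod w ZA ZC); apply: lerD; apply: min_slack_le.
- exact: setUSS.
- by rewrite subUset sZA.
- exact: setISS.
- exact: subset_trans (subsetIl _ _) sZA.
Qed.

Definition cover_cap (cap : Prt -> R) A := \sum_(k in [set e.1 | e in A]) cap k.

Lemma polymatroid_cover_cap cap D : (forall k, 0 <= cap k) -> polymatroid D (cover_cap cap).
Proof.
move=> cap0; have le_cap (K L : {set Prt}) :
    K \subset L -> \sum_(k in K) cap k <= \sum_(k in L) cap k.
  by move=> sKL; apply: sum_subset_le.
split.
- by rewrite /cover_cap imset0 big_set0.
- by move=> A C sAC _; apply/le_cap/imsetS.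
move=> A C _ _; rewrite /cover_cap -[X in _ <= X]sum_setU_setI imsetU lerD2l le_cap //.
by rewrite subsetI !imsetS ?subsetIl ?subsetIr.
Qed.

Section Flow.
Variables (w : Edg -> R) (d : Prt -> \bar R) (S : {set Prt}) (mu : R).
Hypotheses (wP : inP E0 f0 w) (d_ge0 : forall k, (0 <= d k)%E).
Hypothesis cut : forall S', S' \subset S -> forall Z, ESS S' \subset Z -> Z \subset EE ->
  (mu%:E <= (slack w Z)%:E + sumd d (S :\: S'))%E.

(* An infinite demand becomes a capacity that alone already carries [mu]. *)
Definition flow_cap k := if d k is EFin r then r else Num.max mu 0.

Lemma flow_cap_ge0 k : 0 <= flow_cap k.
Proof. by rewrite /flow_cap; case: (d k) (d_ge0 k) => [r||] //; rewrite le_max lexx orbT. Qed.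

Lemma flow_cut A : A \subset ESS S -> mu <= min_slack w A + cover_cap flow_cap (ESS S :\: A).
Proof.
move=> sA; set S' := [set k in S | Ekk k \subset A].
have [Z [sAZ sZ -> _]] := min_slackP w (subset_trans sA (ES_sub S)).
have sS' : S' \subset S by apply/subsetP => k; rewrite inE => /andP[].
have sES' : ESS S' \subset Z.
  apply/subsetP => e; rewrite inES => /andP[eE]; rewrite inE => /andP[_ sk].
  by apply/(subsetP sAZ)/(subsetP sk); rewrite inEk eE eqxx.
have capS : \sum_(k in S :\: S') flow_cap k <= cover_cap flow_cap (ESS S :\: A).
  apply: sum_subset_le => [|k _]; last exact: flow_cap_ge0.
  apply/subsetP => k; rewrite in_setD => /andP[kS' kS].
  have /subsetPn[e ek eA] : ~~ (Ekk k \subset A) by move: kS'; rewrite inE kS.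
  move: ek; rewrite inEk => /andP[eE /eqP ek]; apply/imsetP; exists e => //.
  by rewrite in_setD eA inES eE ek kS.
have slack0 := slack_ge0 wP sZ; have := cut sS' sES' sZ.
have [[k kS dk] | dfin] : (exists2 k, k \in S :\: S' & d k = +oo%E) \/
    (forall k, k \in S :\: S' -> d k = (flow_cap k)%:E).
- case: (boolP [exists k in S :\: S', d k == +oo%E]) => [/existsP[k /andP[kS /eqP]]|/existsPn nk].
    by left; exists k.
  by right=> k kS; have := nk k; rewrite kS /flow_cap; case: (d k) (d_ge0 k).
- have : mu <= flow_cap k by rewrite /flow_cap dk le_max lexx.
  have : flow_cap k <= \sum_(k in S :\: S') flow_cap k.
    by rewrite (bigD1 k) //= lerDl sumr_ge0 // => *; apply: flow_cap_ge0.
  lra.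
by rewrite /sumd (eq_bigr _ dfin) sumEFin -EFinD lee_fin; lra.
Qed.

Lemma exists_flow : exists y, [/\ inPwd E0 f0 w d y,
  forall e, e \notin ESS S -> y e = 0 & mu <= \sum_(e in ESS S) y e].
Proof.
have [y [y0 yS y1 y2 ymu]] := polymatroid_intersection
  (polymatroid_min_slack wP (ES_sub S)) (polymatroid_cover_cap (ESS S) flow_cap_ge0) flow_cut.
exists y; split => //; split; first by move=> e _.
split; first split.
- by move=> e eE; apply: addr_ge0 => //; case: wP => /(_ e eE).
- move=> j F sF; rewrite big_split /= (sum_setI_support F yS).
  have sFE := subset_trans sF (Ej_sub j).
  have := y1 _ (subsetIr F (ESS S)).
  have := min_slack_le w (subsetIl F (ESS S)) sFE.
  by rewrite /slack (f_Ej sF); lra.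
move=> k; case dk : (d k) => [r||]; last by have := d_ge0 k; rewrite dk.
- rewrite lee_fin (sum_setI_support _ yS); apply: le_trans (y2 _ (subsetIr _ _)) _.
  have -> : r = flow_cap k by rewrite /flow_cap dk.
  apply: (@le_trans _ _ (\sum_(k' in [set k]) flow_cap k')); last by rewrite big_set1.
  apply: sum_subset_le => [|k' _]; last exact: flow_cap_ge0.
  apply/subsetP => k' /imsetP[e]; rewrite in_setI inEk => /andP[/andP[_ /eqP ek] _] ->.
  by rewrite ek in_set1.
- exact: leey.
Qed.

End Flow.

Local Open Scope ereal_scope.

Definition gterm w (d : Prt -> \bar R) S T :=
  (ff (ESS T) - sumx (xw E0 w) T)%:E + sumd d (S :\: T).

Local Notation gs w d S := (gsimple E0 f0 (xw E0 w) d S).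

Lemma gsimple_le w d S T : T \subset S -> gs w d S <= gterm w d S T.
Proof. by move=> sTS; apply: (bigmin_le_cond _ (gterm w d S)). Qed.

Lemma gsimple_attained w d S : exists2 T : {set Prt}, T \subset S & gs w d S = gterm w d S T.
Proof.
have [T sTS gsT] := @eq_bigmin _ _ _ +oo S (fun T : {set Prt} => T \subset S)
  (gterm w d S) (subxx S) (fun _ _ => leey _).
by exists T.
Qed.

Lemma sumd_setD (d : Prt -> \bar R) S S' T : T \subset S' -> S' \subset S ->
  sumd d (S :\: T) = sumd d (S' :\: T) + sumd d (S :\: S').
Proof.
move=> sTS' sS'S; rewrite /sumd (big_setID S') /=; congr (_ + _); apply: eq_bigl => k.
  by rewrite !inE; case kS' : (k \in S'); rewrite ?(subsetP sS'S _ kS') ?andbT ?andbF.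
rewrite !inE; case kS' : (k \in S'); rewrite ?andbF ?andbT //=.
by case kT : (k \in T) => //; rewrite (subsetP sTS' _ kT) in kS'.
Qed.

Lemma gsimple_subset w d S S' : S' \subset S -> gs w d S <= gs w d S' + sumd d (S :\: S').
Proof.
move=> sS'S; have [T sTS' ->] := gsimple_attained w d S'.
apply: le_trans (gsimple_le w d (subset_trans sTS' sS'S)) _.
by rewrite /gterm (sumd_setD d sTS' sS'S) addeA.
Qed.

Lemma gsimple_le_demand w (d d' : Prt -> \bar R) S :
  (forall k, d' k <= d k) -> gs w d' S <= gs w d S.
Proof.
move=> le_d'd; have [T sTS ->] := gsimple_attained w d S.
by apply: le_trans (gsimple_le w d' sTS) _; apply/leeD2l/lee_sum => k _.
Qed.

Definition slack_bounded w d := forall S Z, ESS S \subset Z -> Z \subset EE ->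
  gs w d S <= (slack w Z)%:E.

Lemma slack_bounded_le_demand w (d d' : Prt -> \bar R) :
  slack_bounded w d -> (forall k, d' k <= d k) -> slack_bounded w d'.
Proof.
by move=> bd le_d'd S Z sSZ sZ; apply: le_trans (bd S Z sSZ sZ); apply: gsimple_le_demand.
Qed.

Lemma g_eq_gsimple w d S : slack_bounded w d -> g E0 f0 (xw E0 w) d S = gs w d S.
Proof.
move=> bd; apply/eqP; rewrite eq_le; apply/andP; split.
  apply: le_bigmin2 => T _; apply: leeD2r.
  exact: (bigmin_le_cond _ (fun U => (ff (ESS U) - sumx (xw E0 w) U)%:E) (subxx T)).
apply: le_bigmin => [|T sTS]; first exact: leey.
apply: le_trans (gsimple_subset w d sTS) _; apply: leeD2r.
apply: le_bigmin => [|U sTU]; first exact: leey.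
by rewrite sumx_xw; apply: bd; [apply: ES_subset | apply: ES_sub].
Qed.

Lemma inP_le w w' : inP E0 f0 w ->
  (forall e, e \in EE -> (0 <= w' e <= w e)%R) -> inP E0 f0 w'.
Proof.
move=> [_ wP] le_w'w; split => [e /le_w'w /andP[]//|j F sF].
apply: le_trans (wP j F sF); apply: ler_sum => e eF.
by have /andP[] := le_w'w e (subsetP (subset_trans sF (Ej_sub j)) e eF).
Qed.

Lemma inPwd0 w d : inP E0 f0 w -> (forall k, 0 <= d k) -> inPwd E0 f0 w d (fun=> 0%R).
Proof.
move=> wP d0; split=> //; split=> [|k]; last by rewrite big1_eq.
by apply: (inP_le wP) => e eE; rewrite addr0 lexx andbT; case: wP => /(_ e eE).
Qed.

Lemma clinchable_extend w d i xi : clinchable E0 f0 w d i xi ->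
  forall y, inPwd E0 f0 w d y -> (forall e, e \in Ekk i -> y e = 0%R) ->
  exists y', [/\ inPwd E0 f0 w d y', forall e, e \in Ekk i -> y' e = xi e &
    forall k, k != i -> (\sum_(e in Ekk k) y' e = \sum_(e in Ekk k) y e)%R].
Proof.
move=> cl y yP yi.
have [_ [y' [y'P [y'i y'k]]]] : inPi E0 f0 w d i xi (fun k => \sum_(e in Ekk k) y e)%R.
  apply/cl; split; last by exists y.
  move=> k _; apply: sumr_ge0 => e ek; case: yP => y0 _.
  exact/y0/(subsetP (Ek_sub k)).
by exists y'.
Qed.

Lemma xw_add w xi i : (forall e, e \notin Ekk i -> xi e = 0%R) -> forall k,
  xw E0 (fun e => w e + xi e)%R k =
  (xw E0 w k + if k == i then \sum_(e in Ekk i) xi e else 0)%R.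
Proof.
move=> xi0 k; rewrite /xw big_split /=; congr (_ + _)%R.
case: (k =P i) => [->//|/eqP ki]; rewrite big1 // => e ek; apply: xi0.
by move: ek; rewrite !inEk => /andP[-> /eqP ->]; rewrite ki.
Qed.

Lemma sumx_add w xi i : (forall e, e \notin Ekk i -> xi e = 0%R) -> forall T,
  sumx (xw E0 (fun e => w e + xi e)%R) T =
  (sumx (xw E0 w) T + if i \in T then \sum_(e in Ekk i) xi e else 0)%R.
Proof.
by move=> xi0 T; rewrite /sumx (eq_bigr _ (fun k _ => xw_add w xi0 k)) big_split sum_if_eq.
Qed.

Lemma slack_add w xi Z : slack (fun e => w e + xi e)%R Z = (slack w Z - \sum_(e in Z) xi e)%R.
Proof. by rewrite /slack big_split /= opprD addrA. Qed.

Section ClinchStep.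
Variables (w xi : Edg -> R) (d d' : Prt -> \bar R) (i : Prt).
Hypothesis xi0 : forall e, e \notin Ekk i -> xi e = 0%R.
Let X := (\sum_(e in Ekk i) xi e)%R.
Hypotheses (d'i : d' i = d i - X%:E) (d'k : forall k, k != i -> d' k = d k).
Let w' := (fun e => w e + xi e)%R.

Lemma gterm_clinch_in S T : i \in S -> T \subset S ->
  gterm w' d' S T = gterm w d S T - X%:E.
Proof.
move=> iS sTS; rewrite /gterm (sumx_add w xi0); case: ifP => iT.
  have -> : sumd d' (S :\: T) = sumd d (S :\: T).
    by apply: eq_bigr => k; rewrite in_setD => /andP[kT _]; apply: d'k; apply: contraNneq kT => ->.
  by rewrite opprD addrA EFinB addeAC.
have iST : i \in S :\: T by rewrite in_setD iT.
rewrite addr0 /sumd !(bigD1 i iST) /= d'i (eq_bigr d) => [|k /andP[_ /d'k]//].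
by rewrite (addeAC (d i)) addeA.
Qed.

Lemma gterm_clinch_notin S T : i \notin S -> T \subset S -> gterm w' d' S T = gterm w d S T.
Proof.
move=> iS sTS; rewrite /gterm (sumx_add w xi0) ifN ?addr0; last exact: contra (subsetP sTS i) iS.
congr (_ + _); apply: eq_bigr => k; rewrite in_setD => /andP[_ kS].
by apply: d'k; apply: contraNneq iS => <-.
Qed.

Hypotheses (wP : inP E0 f0 w) (d_ge0 : forall k, 0 <= d k).
Hypotheses (cl : clinchable E0 f0 w d i xi) (bd : slack_bounded w d).

(* A flow certifying [gsimple] on [S] can be made to agree with [xi] on E_i,
   because clinching leaves P^i_{w,d} unchanged. *)
Lemma gsimple_le_slack_clinch S Z : i \notin S -> ESS S \subset Z -> Z \subset EE ->
  gs w d S <= (slack w Z - \sum_(e in Z) xi e)%:E.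
Proof.
move=> iS sSZ sZ; case gE : (gs w d S) => [mu||]; last exact: leNye.
- have cut S' : S' \subset S -> forall Z', ESS S' \subset Z' -> Z' \subset EE ->
      mu%:E <= (slack w Z')%:E + sumd d (S :\: S').
    move=> sS'S Z' sZ' sZ'E; rewrite -gE; apply: le_trans (gsimple_subset w d sS'S) _.
    exact/leeD2r/bd.
  have [y [yP yS ymu]] := exists_flow wP d_ge0 cut.
  have yi e : e \in Ekk i -> y e = 0%R.
    by move=> ei; apply: yS; move: ei; rewrite inEk inES => /andP[-> /eqP ->].
  have [y' [[y'0 [y'P _]] y'i y'k]] := clinchable_extend cl yP yi.
  have disj : ESS S :&: (Z :&: Ekk i) = set0.
    apply/setP => e; rewrite in_set0 !in_setI inES inEk.
    by case: (e.1 =P i) => [->|_]; rewrite ?(negbTE iS) ?andbF.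
  have le_y'Z : (\sum_(e in ESS S) y' e + \sum_(e in Z :&: Ekk i) y' e <= \sum_(e in Z) y' e)%R.
    rewrite -(sum_setU_setI (ESS S)) disj big_set0 addr0.
    by apply: sum_subset_le => [|e /(subsetP sZ)/y'0]; rewrite // subUset sSZ subsetIl.
  have y'S : (\sum_(e in ESS S) y' e = \sum_(e in ESS S) y e)%R.
    by rewrite !sum_ES; apply: eq_bigr => k kS; apply: y'k; apply: contraNneq iS => <-.
  have y'Zi : (\sum_(e in Z :&: Ekk i) y' e = \sum_(e in Z) xi e)%R.
    by rewrite (sum_setI_support Z xi0); apply: eq_bigr => e /setIP[_ /y'i].
  have := inP_sum_le y'P sZ; rewrite big_split /=.
  by rewrite lee_fin /slack; lra.
- by have := gsimple_le w d (subxx S); rewrite gE /gterm setDv /sumd big_set0 adde0.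
Qed.

Lemma slack_bounded_clinch : slack_bounded w' d'.
Proof.
move=> S Z sSZ sZ; rewrite slack_add; have [T sTS gsT] := gsimple_attained w d S.
have gs'T := gsimple_le w' d' sTS.
case: (boolP (i \in S)) => iS.
  have sEiZ : Ekk i \subset Z.
    by apply: subset_trans sSZ; apply/subsetP => e; rewrite inEk inES => /andP[-> /eqP ->].
  rewrite (sum_setI_support Z xi0) (setIidPr sEiZ) EFinB.
  apply: le_trans gs'T _; rewrite gterm_clinch_in // -gsT.
  by apply: leeB => //; apply: bd.
apply: le_trans gs'T _; rewrite gterm_clinch_notin // -gsT.
exact: gsimple_le_slack_clinch.
Qed.

End ClinchStep.

Section Auction.
Variables (B : 'I_n -> R) (bid : 'I_(n + m) -> R) (eps : R).
Hypotheses (B_ge0 : forall i, (0 <= B i)%R) (eps_gt0 : (0 < eps)%R).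

Local Notation Bx := (Bext B).
Local Notation dm := (dem B bid).

Lemma dem_ge0 (c p : Prt -> R) k : (0 <= c k)%R -> (p k)%:E <= Bx k -> 0 <= dm c p k.
Proof.
move=> c0 pB; rewrite /dem; case: eqP => [_|/eqP cn0]; first exact: leey.
case: ifP => _ //; apply: mule_ge0; last by rewrite lee_fin invr_ge0.
by rewrite sube_ge0 // orbC.
Qed.

Lemma dem_clinch (c p : Prt -> R) i (X : R) :
  (0 <= c i)%R -> (p i)%:E <= Bx i -> (0 <= X)%R -> X%:E <= dm c p i ->
  let p' := fun k => if k == i then (p k + c i * X)%R else p k in
  dm c p' i = dm c p i - X%:E /\ (p' i)%:E <= Bx i.
Proof.
move=> c0 pB X0 Xd p'; rewrite /p' /dem !eqxx; move: Xd; rewrite /dem.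
case: eqP => [->|/eqP cn0]; first by rewrite mul0r addr0.
have cp : (0 < c i)%R by rewrite lt_def cn0.
case: ifP => _; last first.
  move=> X0'; have -> : X = 0%R by apply/le_anti; rewrite X0 andbT -lee_fin.
  by rewrite mulr0 addr0 sube0.
rewrite /Bext; case: (split i) => [b|b]; last first.
  by rewrite mulyr gtr0_sg ?invr_gt0 // mul1e => _; split => //; apply: leey.
rewrite -!EFinB -!EFinM !lee_fin => h; split.
  by congr EFin; field; rewrite gt_eqF.
by move: h; rewrite ler_pdivlMr // mulrC; lra.
Qed.

Lemma dem_price (c p : Prt -> R) l : (0 <= c l)%R -> (p l)%:E <= Bx l ->
  dm (fun k => if k == l then c k + eps else c k)%R p l <= dm c p l.
Proof.
move=> c0 pB; have d0 := dem_ge0 c0 pB; rewrite /dem eqxx.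
have [->|cn0] := eqVneq (c l) 0%R; first exact: leey.
have cp : (0 < c l)%R by rewrite lt_def cn0.
have cep : (0 < c l + eps)%R by apply: addr_gt0.
rewrite gt_eqF //; case: ifP => h; last by move: d0; rewrite /dem (negbTE cn0).
rewrite ifT; last by apply: lt_trans h; rewrite ltrDl.
apply: lee_pmul => //.
- by rewrite sube_ge0 // orbC.
- by rewrite lee_fin invr_ge0 ltW.
- by rewrite lee_fin lef_pV2 ?posrE // lerDl ltW.
Qed.

Definition auction_inv (s : state R n m) :=
  [/\ inP E0 f0 (st_w s), forall k, (0 <= st_c s k)%R, forall k, (st_p s k)%:E <= Bx k,
      forall k, st_d s k = dm (st_c s) (st_p s) k & slack_bounded (st_w s) (st_d s)].

Lemma auction_inv_init (l0 : Prt) :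
  auction_inv (State (fun=> 0%R) (fun=> 0%R) (fun=> 0%R) (fun=> 0%R) (fun=> +oo) l0).
Proof.
split => /=.
- by split => // j F sF; rewrite big1_eq; apply: fext_ge0.
- by [].
- by move=> k; rewrite /Bext; case: (split k) => [b|b]; rewrite ?lee_fin ?leey.
- by move=> k; rewrite /dem eqxx.
move=> S Z sSZ sZE; apply: le_trans (gsimple_le _ _ (subxx S)) _.
rewrite /gterm setDv /sumd big_set0 adde0 sumx_xw big1_eq subr0.
by rewrite /slack big1_eq subr0 lee_fin; apply: f_mono.
Qed.

Lemma auction_inv_clinch i s s' : auction_inv s -> clinch1 E0 f0 B bid i s s' -> auction_inv s'.
Proof.
move=> [wP c0 pB dE bd] [xi [[[xi_ge0 xi0] [cl _]] [ep [ew [ed [_ [ec _]]]]]]].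
rewrite /auction_inv ed ep ew ec.
have d0 k : 0 <= st_d s k by rewrite dE; apply: dem_ge0.
set X := (\sum_(e in Ekk i) xi e)%R.
have [y [[y_ge0 [wyP yd]] yi _]] := clinchable_extend cl (inPwd0 wP d0) (fun _ _ => erefl).
have Xd : X%:E <= dm (st_c s) (st_p s) i by rewrite -dE /X -(eq_bigr _ yi); apply: yd.
have [dm'i p'B] := dem_clinch (c0 i) (pB i) (sumr_ge0 _ xi_ge0) Xd.
split => //.
- apply: (inP_le wyP) => e eE.
  have /andP[xi_e0 xi_ey] : (0 <= xi e <= y e)%R.
    by case: (boolP (e \in Ekk i)) => [ei|/xi0 ->]; [rewrite yi ?xi_ge0 ?lexx | rewrite lexx y_ge0].
  by rewrite lerD2l xi_ey addr_ge0 // (proj1 wP e eE).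
- by move=> k; case: eqP => [->|_]; [move: p'B; rewrite eqxx | apply: pB].
apply: (slack_bounded_clinch (d := st_d s) xi0) => // [|k ki]; first by rewrite dm'i dE.
by rewrite dE /dem /= (negbTE ki).
Qed.

Lemma auction_inv_price s s' : auction_inv s -> price_step B bid eps s s' -> auction_inv s'.
Proof.
move=> [wP c0 pB dE bd] [ew [ep [_ [ec [ed _]]]]].
rewrite /auction_inv ew ep ec ed; set l := st_l s.
have le_dem := dem_price (c0 l) (pB l).
split => //.
- move=> k; case: eqP => _; last exact: c0.
  by apply: addr_ge0; [apply: c0 | apply: ltW].
- move=> k; case: (k =P l) => [->//|/eqP kl].
  by rewrite dE /dem /= (negbTE kl).
apply: (slack_bounded_le_demand bd) => k.
by case: (k =P l) => [->|_]; rewrite ?dE.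
Qed.

Lemma auction_inv_clinch_all s s' : auction_inv s -> clinch_all E0 f0 B bid s s' -> auction_inv s'.
Proof.
move=> inv_s [seqs [seqs0 [seqsN seqs_step]]].
suff inv_run k : (k <= n + m)%N -> auction_inv (seqs k) by rewrite -seqsN; apply: inv_run.
elim: k => [_|k IH lt_k]; first by rewrite seqs0.
exact: auction_inv_clinch (IH (ltnW lt_k)) (seqs_step (Ordinal lt_k)).
Qed.

Lemma auction_inv_iter s : iter_start E0 f0 B bid eps s -> auction_inv s.
Proof.
elim => [l0 _|s0 s1 s2 _ IH _ clinch price]; first exact: auction_inv_init.
exact: auction_inv_price (auction_inv_clinch_all IH clinch) price.
Qed.

End Auction.
End Market.

Theorem proposition3p8 (R : realFieldType) (n m : nat)
  (E0 : {set 'I_n * 'I_m}) (f0 : 'I_m -> {set 'I_n * 'I_m} -> R)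
  (B : 'I_n -> R) (bid : 'I_(n+m) -> R) (eps : R) :
  (forall j, f0 j set0 = 0) ->
  (forall j (F : {set 'I_n * 'I_m}), F \subset E0j E0 j -> 0 <= f0 j F) ->
  (forall j, monotone_on (E0j E0 j) (f0 j)) ->
  (forall j, submodular_on (E0j E0 j) (f0 j)) ->
  (forall i, 0 <= B i) ->
  0 < eps ->
  (forall k, exists q : nat, (0 < q)%N /\ bid k = q%:R * eps) ->
  forall s : state R n m,
    iter_start E0 f0 B bid eps s ->
    (exists k, st_d s k != 0%E) ->
    forall S : {set 'I_(n+m)},
      g E0 f0 (xw E0 (st_w s)) (st_d s) S = gsimple E0 f0 (xw E0 (st_w s)) (st_d s) S.
Proof.
move=> f0_set0 f0_ge0 f0_mono f0_submod B_ge0 eps_gt0 _ s run _ S.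
have [_ _ _ _ bd] := auction_inv_iter f0_set0 f0_ge0 f0_mono f0_submod B_ge0 eps_gt0 run.
exact: g_eq_gsimple.
Qed.
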